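(* Let $B$ be a supersoluble brace, and let $I$ be an ideal of $B$ which is centrally nilpotent (as a brace). Then $I$ is $B$-centrally nilpotent.
   Context: A brace (skew left brace) is a set $B$ with two binary operations $+$ and $\cdot$ such that $(B,+)$ and $(B,\cdot)$ are groups and $a(b+c)=ab-a+ac$ for all $a,b,c\in B$. $\lambda_a(b)=-a+ab$ defines a homomorphism $\lambda\colon(B,\cdot)\to\operatorname{Aut}(B,+)$. An ideal is a subset that is a subgroup of both groups, normal in both, and invariant under all $\lambda_b$; quotients by ideals are braces, and an ideal is itself a brace. $\operatorname{Soc}(B)=\operatorname{Ker}\lambda\cap Z(B,+)$ and $\zeta(B)=\operatorname{Soc}(B)\cap Z(B,\cdot)$ (both ideals). The upper central series is $\zeta_0(B)=\{0\}$, $\zeta_{k+1}(B)/\zeta_k(B)=\zeta(B/\zeta_k(B))$; $B$ is centrally nilpotent if $B=\zeta_m(B)$ for some $m$. An ideal $I$ of $B$ is $B$-centrally nilpotent if there is a finite chain $\{0\}=I_0\le\dots\le I_n=I$ of ideals of $B$ with $I_{i+1}/I_i\le\zeta(I/I_i)$ for all $i$. $B$ is supersoluble if there is a finite chain of ideals $\{0\}=J_0\le\dots\le J_n=B$ such that for each $i$, either $(J_{i+1}/J_i,+)$ is infinite cyclic and $J_{i+1}/J_i\le\operatorname{Soc}(B/J_i)$, or $J_{i+1}/J_i$ has prime order. *)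

(* braces are possibly
   infinite, so they are given by an explicit carrier type and operations. *)
From mathcomp Require Import all_boot all_algebra.
Set Implicit Arguments. Unset Strict Implicit. Unset Printing Implicit Defensive.

Record brace (T : Type) := Brace {
  badd : T -> T -> T; bopp : T -> T; bzero : T;
  bmul : T -> T -> T; binv : T -> T; bone : T;
  baddA : forall a b c, badd a (badd b c) = badd (badd a b) c;
  badd0l : forall a, badd bzero a = a;
  badd0r : forall a, badd a bzero = a;
  baddNl : forall a, badd (bopp a) a = bzero;
  baddNr : forall a, badd a (bopp a) = bzero;
  bmulA : forall a b c, bmul a (bmul b c) = bmul (bmul a b) c;
  bmul1l : forall a, bmul bone a = a;
  bmul1r : forall a, bmul a bone = a;
  bmulVl : forall a, bmul (binv a) a = bone;
  bmulVr : forall a, bmul a (binv a) = bone;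
  brace_law : forall a b c,
    bmul a (badd b c) = badd (badd (bmul a b) (bopp a)) (bmul a c)
}.

Section BraceDefs.
Variables (T : Type) (B : brace T).

Local Notation "a + b" := (badd B a b).
Local Notation "- a" := (bopp B a).
Local Notation "a * b" := (bmul B a b).

Definition blambda (a b : T) : T := - a + a * b.

Definition is_ideal (I : T -> Prop) : Prop :=
  I (bzero B) /\
  (forall a b, I a -> I b -> I (a + b)) /\
  (forall a, I a -> I (- a)) /\
  I (bone B) /\
  (forall a b, I a -> I b -> I (a * b)) /\
  (forall a, I a -> I (binv B a)) /\
  (forall b a, I a -> I (b + a + - b)) /\
  (forall b a, I a -> I (b * a * binv B b)) /\
  (forall b a, I a -> I (blambda b a)).

(* congruence modulo a (normal) ideal J: x + J = y + J  (= xJ = yJ) *)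
Definition eqmod (J : T -> Prop) (x y : T) : Prop := J (- x + y).

(* x + J lies in Soc(S/J), for S a sub-brace containing the ideal J *)
Definition soc_in (S J : T -> Prop) (x : T) : Prop :=
  S x /\ forall b, S b ->
    eqmod J (blambda x b) b /\ eqmod J (x + b) (b + x).

(* x + J lies in zeta(S/J) = Soc(S/J) ∩ Z(S/J, .) *)
Definition zeta_in (S J : T -> Prop) (x : T) : Prop :=
  soc_in S J x /\ forall b, S b -> eqmod J (x * b) (b * x).

Fixpoint zeta_series (S : T -> Prop) (k : nat) : T -> Prop :=
  match k with
  | 0 => fun x => x = bzero B
  | k'.+1 => zeta_in S (zeta_series S k')
  end.

Definition centrally_nilpotent (S : T -> Prop) : Prop :=
  exists m, forall x, S x <-> zeta_series S m x.

Definition B_centrally_nilpotent (I : T -> Prop) : Prop :=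
  exists (n : nat) (Ic : nat -> T -> Prop),
    (forall x, Ic 0 x <-> x = bzero B) /\
    (forall x, Ic n x <-> I x) /\
    (forall i, i <= n -> is_ideal (Ic i)) /\
    (forall i, i < n -> forall x, Ic i x -> Ic i.+1 x) /\
    (forall i, i < n -> forall x, Ic i.+1 x -> zeta_in I (Ic i) x).

Definition bzmul (k : int) (g : T) : T :=
  match k with
  | Posz n => iter n (fun y => g + y) (bzero B)
  | Negz n => - iter n.+1 (fun y => g + y) (bzero B)
  end.

Definition quot_inf_cyclic (J2 J1 : T -> Prop) : Prop :=
  exists g, J2 g /\
    (forall x, J2 x -> exists k : int, eqmod J1 x (bzmul k g)) /\
    (forall k l : int, eqmod J1 (bzmul k g) (bzmul l g) -> k = l).

Definition quot_prime_order (J2 J1 : T -> Prop) : Prop :=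
  exists p : nat, prime p /\ exists f : 'I_p -> T,
    (forall j, J2 (f j)) /\
    (forall j j', eqmod J1 (f j) (f j') -> j = j') /\
    (forall x, J2 x -> exists j, eqmod J1 x (f j)).

Definition supersoluble : Prop :=
  exists (n : nat) (J : nat -> T -> Prop),
    (forall x, J 0 x <-> x = bzero B) /\
    (forall x, J n x) /\
    (forall i, i <= n -> is_ideal (J i)) /\
    (forall i, i < n -> forall x, J i x -> J i.+1 x) /\
    (forall i, i < n ->
       (quot_inf_cyclic (J i.+1) (J i) /\
        forall x, J i.+1 x -> soc_in (fun _ => True) (J i) x)
       \/ quot_prime_order (J i.+1) (J i)).

End BraceDefs.

From mathcomp Require Import all_boot all_algebra zify boolp.
From Stdlib Require Import Setoid Morphisms.

(* Let J_0 <= ... <= J_n = B be a supersoluble series and put I_i := J_i ∩ I.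
   It suffices that every x in J_(i+1) ∩ I is central in I modulo J_i, i.e.
   lies in ζ(I/J_i), and these elements form a subgroup of (I,+).
   If J_(i+1) ∩ I is not inside J_i, walk down the upper central series of
   I = ζ_m(I): the defects of an element of ζ_(j+1)(I) ∩ J_(i+1) lie in
   ζ_j(I) ∩ J_(i+1), so some y in J_(i+1) \ J_i is central modulo J_i.
   When J_(i+1)/J_i has prime order, the classes of central elements form a
   subgroup containing the class of y, hence everything.  When J_(i+1)/J_i
   = Zg is infinite cyclic and in the socle of B/J_i, each λ_b with b in I
   acts on it as multiplication by some e in Z; since λ_b fixes the non-zero
   class of y, e = 1, and then all of J_(i+1) ∩ I is central modulo J_i. *)

Set Implicit Arguments. Unset Strict Implicit. Unset Printing Implicit Defensive.

Import GRing.Theory.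

Section BraceAlgebra.
Variables (T : Type) (B : brace T).
Local Notation "0" := (bzero B).
Local Notation "a + b" := (badd B a b).
Local Notation "- a" := (bopp B a).
Local Notation "a * b" := (bmul B a b).
Local Notation "a ^-1" := (binv B a).
Local Notation lam := (blambda B).

Lemma baddKl a b : - a + (a + b) = b.
Proof. by rewrite baddA baddNl badd0l. Qed.

Lemma baddNKl a b : a + (- a + b) = b.
Proof. by rewrite baddA baddNr badd0l. Qed.

Lemma baddKr a b : a + b + - b = a.
Proof. by rewrite -baddA baddNr badd0r. Qed.

Lemma baddIl a : injective (badd B a).
Proof. by move=> b c e; rewrite -(baddKl a b) e baddKl. Qed.

Lemma bopp_uniq a b : a + b = 0 -> - a = b.
Proof. by move=> e; apply: (@baddIl a); rewrite baddNr e. Qed.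

Lemma boppK a : - - a = a.
Proof. by apply: bopp_uniq; rewrite baddNl. Qed.

Lemma bopp0 : - 0 = 0.
Proof. by apply: bopp_uniq; rewrite badd0r. Qed.

Lemma boppD a b : - (a + b) = - b + - a.
Proof. by apply: bopp_uniq; rewrite baddA baddKr baddNr. Qed.

Lemma bmulKl a b : a^-1 * (a * b) = b.
Proof. by rewrite bmulA bmulVl bmul1l. Qed.

Lemma bmulKr a b : a * b * b^-1 = a.
Proof. by rewrite -bmulA bmulVr bmul1r. Qed.

Lemma bmulIl a : injective (bmul B a).
Proof. by move=> b c e; rewrite -(bmulKl a b) e bmulKl. Qed.

Lemma binv_uniq a b : a * b = bone B -> a^-1 = b.
Proof. by move=> e; apply: (@bmulIl a); rewrite bmulVr e. Qed.

Lemma binvK a : (a^-1)^-1 = a.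
Proof. by apply: binv_uniq; rewrite bmulVl. Qed.

Lemma binvM a b : (a * b)^-1 = b^-1 * a^-1.
Proof. by apply: binv_uniq; rewrite bmulA bmulKr bmulVr. Qed.

Lemma bmul_lambda a b : a * b = a + lam a b.
Proof. by rewrite /blambda baddNKl. Qed.

Lemma blambdaD a b c : lam a (b + c) = lam a b + lam a c.
Proof. by rewrite /blambda brace_law !baddA. Qed.

Lemma blambda0 a : lam a 0 = 0.
Proof. by apply: (@baddIl (lam a 0)); rewrite -blambdaD !badd0r. Qed.

Lemma bmulr0 a : a * 0 = a.
Proof. by rewrite bmul_lambda blambda0 badd0r. Qed.

Lemma bone0 : bone B = 0.
Proof. by rewrite -(bmul1l B 0) bmulr0. Qed.

Lemma bmul0r a : 0 * a = a.
Proof. by rewrite -bone0 bmul1l. Qed.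

Lemma blambda1 b : lam 0 b = b.
Proof. by rewrite /blambda bopp0 bmul0r badd0l. Qed.

Lemma blambdaN a b : lam a (- b) = - lam a b.
Proof. by symmetry; apply: bopp_uniq; rewrite -blambdaD baddNr blambda0. Qed.

Lemma blambdaM a b c : lam (a * b) c = lam a (lam b c).
Proof.
rewrite [lam b c]/blambda blambdaD blambdaN /blambda boppD boppK.
by rewrite -baddA baddNKl bmulA.
Qed.

Lemma blambdaKV a b : lam a (lam a^-1 b) = b.
Proof. by rewrite -blambdaM bmulVr bone0 blambda1. Qed.

End BraceAlgebra.

Section Ideals.
Variables (T : Type) (B : brace T) (J : T -> Prop).
Hypothesis hJ : is_ideal B J.
Local Notation "0" := (bzero B).
Local Notation "a + b" := (badd B a b).
Local Notation "- a" := (bopp B a).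
Local Notation "a * b" := (bmul B a b).
Local Notation "a ^-1" := (binv B a).

Lemma ideal0 : J 0.
Proof. by case: hJ. Qed.

Lemma idealD a b : J a -> J b -> J (a + b).
Proof. by case: hJ => _ [+ _]; apply. Qed.

Lemma idealN a : J a -> J (- a).
Proof. by case: hJ => _ [_ [+ _]]; apply. Qed.

Lemma idealM a b : J a -> J b -> J (a * b).
Proof. by case: hJ => _ [_ [_ [_ [+ _]]]]; apply. Qed.

Lemma idealV a : J a -> J a^-1.
Proof. by case: hJ => _ [_ [_ [_ [_ [+ _]]]]]; apply. Qed.

Lemma ideal_addJ b a : J a -> J (b + a + - b).
Proof. by case: hJ => _ [_ [_ [_ [_ [_ [+ _]]]]]]; apply. Qed.

Lemma ideal_mulJ b a : J a -> J (b * a * b^-1).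
Proof. by case: hJ => _ [_ [_ [_ [_ [_ [_ [+ _]]]]]]]; apply. Qed.

Lemma ideal_lambda b a : J a -> J (blambda B b a).
Proof. by case: hJ => _ [_ [_ [_ [_ [_ [_ [_ +]]]]]]]; apply. Qed.

End Ideals.

Lemma ideal_meet T (B : brace T) (J K : T -> Prop) :
  is_ideal B J -> is_ideal B K -> is_ideal B (fun x => J x /\ K x).
Proof.
move=> hJ hK; rewrite /is_ideal bone0.
split; first by split; apply: ideal0.
split; first by move=> a b [? ?] [? ?]; split; apply: idealD.
split; first by move=> a [? ?]; split; apply: idealN.
split; first by split; apply: ideal0.
split; first by move=> a b [? ?] [? ?]; split; apply: idealM.
split; first by move=> a [? ?]; split; apply: idealV.
split; first by move=> b a [? ?]; split; apply: ideal_addJ.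
split; first by move=> b a [? ?]; split; apply: ideal_mulJ.
by move=> b a [? ?]; split; apply: ideal_lambda.
Qed.

Section IntegerMultiples.
Variables (T : Type) (B : brace T).
Local Notation "0" := (bzero B).
Local Notation "a + b" := (badd B a b).
Local Notation "- a" := (bopp B a).
Local Notation zm := (bzmul B).

Lemma bzmul1 g : zm 1 g = g.
Proof. exact: badd0r. Qed.

Lemma iter_badd_comm n g : g + iter n (badd B g) 0 = iter n (badd B g) 0 + g.
Proof. by elim: n => [|n IH] /=; rewrite ?badd0l ?badd0r // -baddA -IH. Qed.

Lemma bzmulS k g : zm (k + 1)%R g = zm k g + g.
Proof.
case: k => [n|[|n]].
- by rewrite -PoszD addn1 /= iter_badd_comm.
- by rewrite /= badd0r baddNl.
have -> : (Negz n.+1 + 1 = Negz n)%R by lia.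
by rewrite /= [in RHS]boppD -baddA baddNl badd0r.
Qed.

Lemma bzmulD k l g : zm (k + l)%R g = zm k g + zm l g.
Proof.
have bzmulSN j : zm (j - 1)%R g = zm j g + - g.
  by rewrite -[in RHS](subrK 1%R j) bzmulS baddKr.
case: l => n; elim: n => [|n IH].
- by rewrite addr0 /= badd0r.
- by rewrite -addn1 PoszD addrA !bzmulS IH baddA.
- have -> : (k + Negz 0 = k - 1)%R by lia.
  by rewrite bzmulSN /= badd0r.
have -> : Negz n.+1 = (Negz n - 1)%R by rewrite !NegzE; lia.
by rewrite addrA !bzmulSN IH baddA.
Qed.

Lemma bzmul_uniq (F : int -> T) :
  {morph F : k l / (k + l)%R >-> k + l} -> forall k, F k = zm k (F 1%R).
Proof.
move=> FD.
have F0 : F 0%R = 0 by apply: (@baddIl _ B (F 0%R)); rewrite -FD addr0 badd0r.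
have FP (n : nat) : F n = zm n (F 1%R).
  elim: n => [|n IH]; first exact: F0.
  by rewrite -[in LHS]addn1 PoszD FD IH /= iter_badd_comm.
case=> n //; change (F (Negz n) = - zm n.+1 (F 1%R)).
by rewrite -FP NegzE; symmetry; apply: bopp_uniq; rewrite -FD addrN.
Qed.

Lemma bzmulM k e g : zm k (zm e g) = zm (k * e)%R g.
Proof.
rewrite [RHS](@bzmul_uniq (fun k => zm (k * e)%R g)) ?mul1r // => a b.
by rewrite mulrDl bzmulD.
Qed.

Lemma bzmul_morph (f : T -> T) : {morph f : a b / a + b} ->
  forall k g, f (zm k g) = zm k (f g).
Proof.
move=> fD k g; rewrite [LHS](@bzmul_uniq (fun k => f (zm k g))) ?bzmul1 // => a b.
by rewrite bzmulD fD.
Qed.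

End IntegerMultiples.

Section Congruence.
Variables (T : Type) (B : brace T) (J : T -> Prop).
Hypothesis hJ : is_ideal B J.
Local Notation "0" := (bzero B).
Local Notation "a + b" := (badd B a b).
Local Notation "- a" := (bopp B a).
Local Notation "a * b" := (bmul B a b).
Local Notation "a ^-1" := (binv B a).
Local Notation lam := (blambda B).
Local Notation "u ≡ v" := (eqmod B J u v) (at level 70).

Lemma eqmod0 u : u ≡ 0 <-> J u.
Proof.
rewrite /eqmod badd0r; split=> [/(idealN hJ)|/(idealN hJ)] //.
by rewrite boppK.
Qed.

#[local] Instance eqmod_equiv : Equivalence (eqmod B J).
Proof.
split=> [u|u v|u v w].
- by rewrite /eqmod baddNl; apply: (ideal0 hJ).
- by rewrite /eqmod => /(idealN hJ); rewrite boppD boppK.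
- by rewrite /eqmod => Juv Jvw; rewrite -(baddNKl B v w) baddA; apply: (idealD hJ).
Qed.

#[local] Hint Extern 0 (eqmod _ _ _ _) => reflexivity : core.

#[local] Instance badd_eqmod : Proper (eqmod B J ==> eqmod B J ==> eqmod B J) (badd B).
Proof.
rewrite /eqmod => u u' Ju v v' Jv.
have -> : - (u + v) + (u' + v') = (- v + (- u + u') + - - v) + (- v + v').
  by rewrite boppK boppD !baddA baddKr.
by apply: (idealD hJ) => //; apply: (ideal_addJ hJ).
Qed.

#[local] Instance bopp_eqmod : Proper (eqmod B J ==> eqmod B J) (bopp B).
Proof.
rewrite /eqmod => u u' Ju.
have -> : - - u + - u' = u + - (- u + u') + - u by rewrite boppD boppK !baddA baddKr.
by apply: (ideal_addJ hJ); apply: (idealN hJ).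
Qed.

Lemma eqmod_mulE u v : u ≡ v <-> J (u^-1 * v).
Proof.
have -> : u^-1 * v = lam u^-1 (- u + v).
  by rewrite blambdaD blambdaN /blambda bmulVl bone0 badd0r boppK baddNKl.
split; first exact: (ideal_lambda hJ).
by rewrite /eqmod -{2}(blambdaKV B u (- u + v)); apply: (ideal_lambda hJ).
Qed.

#[local] Instance bmul_eqmod : Proper (eqmod B J ==> eqmod B J ==> eqmod B J) (bmul B).
Proof.
move=> u u' + v v'; rewrite !eqmod_mulE => Ju Jv.
have -> : (u * v)^-1 * (u' * v') = v^-1 * (u^-1 * u') * (v^-1)^-1 * (v^-1 * v').
  by rewrite binvK binvM !bmulA bmulKr.
by apply: (idealM hJ) => //; apply: (ideal_mulJ hJ).
Qed.

#[local] Instance blambda_eqmod : Proper (eqmod B J ==> eqmod B J ==> eqmod B J) lam.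
Proof. by move=> u u' Ju v v' Jv; rewrite /blambda Ju Jv. Qed.

#[local] Instance bzmul_eqmod k : Proper (eqmod B J ==> eqmod B J) (bzmul B k).
Proof.
move=> u v Juv.
have iterE n : iter n (fun y => u + y) 0 ≡ iter n (fun y => v + y) 0.
  by elim: n => //= n IH; rewrite IH Juv.
by case: k => n /=; rewrite iterE ?Juv.
Qed.

(* [f] enumerates K/J and [idx] inverts it, so this is Lagrange's theorem for
   the image [Hbar] of the subgroup H in K/J. *)
Section PrimeQuotient.
Variables (K H : T -> Prop) (p : nat) (f : 'I_p -> T) (idx : T -> 'I_p).
Hypothesis hK : is_ideal B K.
Hypotheses (Kf : forall j, K (f j)) (f_inj : forall j j', f j ≡ f j' -> j = j').
Hypothesis idxP : forall x, K x -> x ≡ f (idx x).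
Hypotheses (HD : forall a b, H a -> H b -> H (a + b)) (HN : forall a, H a -> H (- a)).
Hypothesis HJ : forall a, J a -> H a.

Lemma idx_eq u v : K u -> K v -> idx u = idx v <-> u ≡ v.
Proof.
move=> Ku Kv; split=> [e|uv]; first by rewrite (idxP Ku) (idxP Kv) e.
by apply: f_inj; rewrite -(idxP Ku) -(idxP Kv).
Qed.

Lemma subgroup_eqmod u v : u ≡ v -> H u -> H v.
Proof. by move=> uv Hu; rewrite -(baddNKl B u v); apply: HD => //; apply: HJ. Qed.

Let Hbar := [set j | `[< H (f j) >]].
Let same_coset j j' := `[< H (- f j + f j') >].

Lemma same_coset_class j :
  [set j' in [set: 'I_p] | same_coset j j'] = [set idx (f j + f a) | a in Hbar].
Proof.
apply/setP=> j'; rewrite !inE; apply/asboolP/imsetP => [Hj'|[a]].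
- have Kd : K (- f j + f j') := idealD hK (idealN hK (Kf j)) (Kf j').
  exists (idx (- f j + f j')).
    by rewrite inE; apply/asboolP; apply: subgroup_eqmod Hj'; apply: idxP.
  apply: f_inj; rewrite -(idxP (idealD hK (Kf j) (Kf _))).
  by rewrite -(idxP Kd) baddNKl.
rewrite inE => /asboolP Ha ->; apply: subgroup_eqmod Ha.
by rewrite -(idxP (idealD hK (Kf j) (Kf a))) baddKl.
Qed.

Lemma card_same_coset_class j : #|[set j' in [set: 'I_p] | same_coset j j']| = #|Hbar|.
Proof.
rewrite same_coset_class card_in_imset // => a b _ _ /idx_eq.
have Kfj c : K (f j + f c) by apply: idealD.
move=> /(_ (Kfj a) (Kfj b)) ab; apply: f_inj.
by rewrite -(baddKl B (f j) (f a)) ab baddKl.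
Qed.

Lemma card_Hbar_dvd : #|Hbar| %| p.
Proof.
have same_coset_equiv : {in [set: 'I_p] & &, equivalence_rel same_coset}.
  move=> a b c _ _ _; split.
    by apply/asboolP; rewrite baddNl; apply/HJ/(ideal0 hJ).
  move/asboolP=> Hab; apply/asboolP/asboolP => Hc.
    by have := HD (HN Hab) Hc; rewrite boppD boppK -baddA baddNKl.
  by have := HD Hab Hc; rewrite -baddA baddNKl.
apply/dvdnP; exists #|equivalence_partition same_coset [set: 'I_p]|.
rewrite -[p in LHS]card_ord -cardsT.
apply: card_uniform_partition (equivalence_partitionP same_coset_equiv).
by move=> C /imsetP [j _ ->]; apply: card_same_coset_class.
Qed.

Lemma prime_quotient_subgroup_full y :
  prime p -> K y -> ~ J y -> H y -> forall x, K x -> H x.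
Proof.
move=> p_pr Ky nJy Hy.
have Hbar_gt1 : 1 < #|Hbar|.
  apply/card_gt1P; exists (idx 0), (idx y); rewrite !inE; split.
  - apply/asboolP; apply: subgroup_eqmod (HJ (ideal0 hJ)).
    by apply: idxP; apply: ideal0.
  - by apply/asboolP; apply: subgroup_eqmod Hy; apply: idxP.
  apply/eqP => /idx_eq-/(_ (ideal0 hK) Ky) y0; apply: nJy.
  by apply/eqmod0; rewrite -y0.
have Hbar_full : Hbar = [set: 'I_p].
  apply/eqP; rewrite eqEcard subsetT cardsT card_ord.
  have Hbar_neq1 : #|Hbar| != 1 by rewrite neq_ltn Hbar_gt1 orbT.
  by rewrite (prime_nt_dvdP p_pr Hbar_neq1 card_Hbar_dvd) leqnn.
move=> x Kx; have : idx x \in Hbar by rewrite Hbar_full inE.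
by rewrite inE => /asboolP; apply: subgroup_eqmod; symmetry; apply: idxP.
Qed.

End PrimeQuotient.

Section Zeta.
Variable S : T -> Prop.

Lemma zeta_inP x : zeta_in B S J x <->
  S x /\ forall b, S b -> [/\ lam x b ≡ b, x + b ≡ b + x & lam b x ≡ x].
Proof.
split=> [[[Sx soc] cen]|[Sx zx]].
  split=> // b Sb; have [lxb xbC] := soc b Sb; split=> //.
  have e : b + lam b x ≡ b + x by rewrite -bmul_lambda -cen // bmul_lambda lxb xbC.
  by rewrite -(baddKl B b (lam b x)) e baddKl.
split; first by split=> // b /zx [].
by move=> b /zx [lxb xbC lbx]; rewrite !bmul_lambda lxb lbx xbC.
Qed.

Lemma zeta_in_ideal u : S u -> J u -> zeta_in B S J u.
Proof.
move=> Su /eqmod0 u0; apply/zeta_inP; split=> // b _.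
by split; rewrite u0 ?blambda1 ?blambda0 ?badd0l ?badd0r.
Qed.

Lemma zeta_in_eqmod u v : S v -> u ≡ v -> zeta_in B S J u -> zeta_in B S J v.
Proof.
move=> Sv uv /zeta_inP [_ zu]; apply/zeta_inP; split=> // b /zu.
by case=> lub ubC lbu; split; rewrite -uv.
Qed.

Hypothesis hS : is_ideal B S.

Lemma zeta_inD x y : zeta_in B S J x -> zeta_in B S J y -> zeta_in B S J (x + y).
Proof.
move=> /zeta_inP [Sx zx] /zeta_inP [Sy zy]; apply/zeta_inP.
split=> [|b Sb]; first exact: idealD.
have [lxy _ _] := zx y Sy.
have xyE : x + y ≡ x * y by rewrite bmul_lambda lxy.
have [lxb xbC lbx] := zx b Sb; have [lyb ybC lby] := zy b Sb.
split.
- by rewrite xyE blambdaM lyb lxb.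
- by rewrite -baddA ybC baddA xbC -baddA.
- by rewrite blambdaD lbx lby.
Qed.

Lemma zeta_inN x : zeta_in B S J x -> zeta_in B S J (- x).
Proof.
move=> /zeta_inP [Sx zx]; apply/zeta_inP.
split=> [|b Sb]; first exact: idealN.
have [lxV _ _] := zx _ (idealV hS Sx).
have NxE : - x ≡ x^-1.
  by rewrite -[X in _ ≡ X](baddKl B x) -lxV -bmul_lambda bmulVr bone0 badd0r.
have [lxb xbC lbx] := zx b Sb.
split.
- have [lxVb _ _] := zx _ (ideal_lambda hS x^-1 Sb).
  by rewrite NxE -lxVb blambdaKV.
- by rewrite -{1}(baddKr B b x) -xbC baddA baddKl.
- by rewrite blambdaN lbx.
Qed.

Lemma zeta_in_meet_ideal x :
  zeta_in B S J x -> zeta_in B S (fun y => J y /\ S y) x.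
Proof.
have capE u v : S u -> S v -> u ≡ v -> eqmod B (fun y => J y /\ S y) u v.
  by move=> Su Sv; split=> //; apply: (idealD hS); first apply: (idealN hS).
move=> [[Sx soc] cen]; split; first split=> // b Sb.
  have [lxb xbC] := soc b Sb; split; apply: capE => //.
  - exact: ideal_lambda.
  - exact: idealD.
  - exact: idealD.
by move=> b Sb; apply: capE (cen b Sb); apply: idealM.
Qed.

Lemma zeta_in_prime_quotient K y : is_ideal B K -> quot_prime_order B K J ->
  K y -> ~ J y -> zeta_in B S J y -> forall x, K x -> S x -> zeta_in B S J x.
Proof.
move=> hK [p [p_pr [f [Kf [f_inj f_surj]]]]] Ky nJy zy x Kx Sx.
have /choice [idx idxP] : forall u, exists j : 'I_p, K u -> u ≡ f j.
  move=> u; case: (pselect (K u)) => [/f_surj [j uj]|nKu]; first by exists j.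
  by exists (Ordinal (prime_gt0 p_pr)) => /nKu.
pose H a := exists2 u, zeta_in B S J u & a ≡ u.
have [u zu xu] : H x.
  apply: (prime_quotient_subgroup_full hK Kf f_inj idxP _ _ _ p_pr Ky nJy) => //.
  - move=> a b [u zu au] [v zv bv].
    by exists (u + v); [apply: zeta_inD | rewrite au bv].
  - by move=> a [u zu au]; exists (- u); [apply: zeta_inN | rewrite au].
  - move=> a Ja; exists 0; last exact/eqmod0.
    exact: zeta_in_ideal (ideal0 hS) (ideal0 hJ).
  - by exists y.
by apply: zeta_in_eqmod Sx _ zu; symmetry.
Qed.

Lemma zeta_in_inf_cyclic_quotient K y : is_ideal B K -> quot_inf_cyclic B K J ->
  (forall x, K x -> soc_in B (fun _ => True) J x) ->
  K y -> ~ J y -> zeta_in B S J y -> forall x, K x -> S x -> zeta_in B S J x.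
Proof.
move=> hK [g [Kg [g_surj g_inj]]] socK Ky nJy /zeta_inP [_ zy].
have lambda_bzmul b k : lam b (bzmul B k g) = bzmul B k (lam b g).
  exact: bzmul_morph (blambdaD B b) k g.
have lam_g b : S b -> lam b g ≡ g.
  move=> Sb; have [e ge] := g_surj _ (ideal_lambda hK b Kg).
  have [k yk] := g_surj _ Ky.
  have k_neq0 : k != 0%R by apply/eqP => k0; apply: nJy; apply/eqmod0; rewrite yk k0.
  have /g_inj ke : bzmul B (k * e) g ≡ bzmul B k g.
    have [_ _ lby] := zy b Sb.
    by rewrite -bzmulM -ge -lambda_bzmul -yk.
  by rewrite ge (_ : e = 1%R) ?bzmul1 //; apply: (mulfI k_neq0); rewrite ke mulr1.
move=> x Kx Sx; apply/zeta_inP; split=> // b Sb.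
have [_ socx] := socK x Kx; have [lxb xbC] := socx b I.
split=> //; have [l xl] := g_surj x Kx.
by rewrite xl lambda_bzmul lam_g.
Qed.

End Zeta.

End Congruence.

Lemma zeta_in_meet T (B : brace T) (S K K' J : T -> Prop) x :
  (forall u, K u -> K' u -> J u) ->
  zeta_in B S K x -> zeta_in B S K' x -> zeta_in B S J x.
Proof.
move=> sub [[Sx s] c] [[_ s'] c']; split; first split=> // b Sb.
  by case: (s b Sb) (s' b Sb) => ? ? [? ?]; split; apply: sub.
by move=> b Sb; apply: sub; [apply: c | apply: c'].
Qed.

Section CentralSeries.
Variables (T : Type) (B : brace T) (S Ji Jn : T -> Prop) (m : nat).
Hypotheses (hS : is_ideal B S) (hJi : is_ideal B Ji) (hJn : is_ideal B Jn).
Hypothesis S_nil : forall x, S x -> zeta_series B S m x.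

Lemma zeta_series_sub j y : zeta_series B S j y -> S y.
Proof. by case: j => [/= ->|j [[]]] //; apply: ideal0. Qed.

Lemma exists_zeta_in_outside j y : Jn y -> zeta_series B S j y -> ~ Ji y ->
  exists2 y', Jn y' /\ ~ Ji y' & zeta_in B S Ji y'.
Proof.
elim: j y => [|j IH] y Jny Zy nJy; first by case: nJy; rewrite Zy; apply: ideal0.
have [[y' [Jny' Zy' nJy']]|no_y'] :=
  pselect (exists y', [/\ Jn y', zeta_series B S j y' & ~ Ji y']).
  exact: (IH y').
exists y => //; apply: (zeta_in_meet _ Zy (zeta_in_ideal hJn (zeta_series_sub Zy) Jny)).
by move=> u Zu Jnu; apply: contrapT => nJu; apply: no_y'; exists u.
Qed.

Lemma zeta_in_by_witness :
  (forall y, Jn y -> ~ Ji y -> zeta_in B S Ji y ->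
     forall x, Jn x -> S x -> zeta_in B S Ji x) ->
  forall x, Jn x -> S x -> zeta_in B S Ji x.
Proof.
move=> extend x Jnx Sx; have [Jix|nJix] := pselect (Ji x).
  exact: zeta_in_ideal.
have [y [Jny nJy] zy] := exists_zeta_in_outside Jnx (S_nil Sx) nJix.
exact: (extend y).
Qed.

End CentralSeries.

Theorem theorem3p36 (T : Type) (B : brace T) (I : T -> Prop) :
  supersoluble B -> is_ideal B I -> centrally_nilpotent B I ->
  B_centrally_nilpotent B I.
Proof.
move=> [n [J [J0 [JT [Jid [Jinc Jstep]]]]]] hI [m hZ].
exists n, (fun i x => J i x /\ I x); split; [|split; [|split; [|split]]].
- by move=> x; split=> [[/J0]|->] //; split; [exact/J0 | exact: ideal0].
- by move=> x; split=> [[]|Ix]; [|split].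
- by move=> i le_in; apply: ideal_meet => //; apply: Jid.
- by move=> i lt_in x [Jx Ix]; split=> //; apply: Jinc.
move=> i lt_in x [Jx Ix].
have hJi := Jid i (ltnW lt_in); have hJn := Jid i.+1 lt_in.
apply: (zeta_in_meet_ideal hI).
apply: (zeta_in_by_witness hI hJi hJn (fun x => proj1 (hZ x)) _ Jx Ix) => y Jny nJy zy.
case: (Jstep i lt_in) => [[cyc soc]|prime_ord].
- exact: zeta_in_inf_cyclic_quotient cyc soc Jny nJy zy.
- exact: zeta_in_prime_quotient prime_ord Jny nJy zy.
Qed.
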